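(* Let $3\le k\le n-1$ and let $T$ be a tree attaining the maximum value of $M_2$ over $\mathcal{CT}_{n,k}$. If $T$ contains a pendent vertex adjacent to a vertex of degree $4$, then $T$ contains no vertex of degree $3$ adjacent to a vertex of degree $2$.
   Context: A chemical tree is a tree with maximum degree at most $4$. A pendent vertex has degree $1$. A segment of a tree is a path of positive length neither of whose end vertices has degree $2$ and all of whose internal vertices have degree $2$. $\mathcal{CT}_{n,k}$ is the class of all $n$-vertex chemical trees with exactly $k$ segments. $M_2(G)=\sum_{uv\in E(G)}d_ud_v$, where $d_v$ is the degree of $v$. *)

From mathcomp Require Import all_boot.
Set Implicit Arguments. Unset Strict Implicit. Unset Printing Implicit Defensive.

Section Graphs.
Variable n : nat.
Implicit Types (e : rel 'I_n).

Definition simple_graph e := symmetric e /\ irreflexive e.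

Definition deg e (v : 'I_n) : nat := #|[pred w | e v w]|.

Definition acyclic e :=
  forall p : seq 'I_n, 3 <= size p -> uniq p -> ~~ cycle e p.

Definition is_tree e :=
  simple_graph e /\ (forall u v, connect e u v) /\ acyclic e.

Definition chemical e := forall v, deg e v <= 4.

Definition M2 e : nat :=
  \sum_(u : 'I_n) \sum_(v : 'I_n | (u < v) && e u v) deg e u * deg e v.

Definition is_dsegment e (p : seq 'I_n) : Prop :=
  match p with
  | [::] => False
  | x :: q => [&& 1 <= size q, uniq p, path e x q,
                  deg e x != 2, deg e (last x q) != 2 &
                  all (fun v => deg e v == 2) (behead (belast x q))]
  end.

(* exactly k segments: every segment (an undirected path) corresponds to
   exactly two directed vertex sequences, so there are 2k of these *)
Definition num_segments e (k : nat) : Prop :=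
  exists s : seq (seq 'I_n),
    [/\ uniq s, (forall p, p \in s <-> is_dsegment e p) & size s = 2 * k].

Definition CT e (k : nat) : Prop := [/\ is_tree e, chemical e & num_segments e k].

End Graphs.

From mathcomp Require Import all_boot zify.
Set Implicit Arguments. Unset Strict Implicit. Unset Printing Implicit Defensive.

(* Let p be the pendent vertex at w, deg w = 4, and xy an edge with
   {deg x, deg y} = {3, 2}.  Since T - xy has two components, the edge can be
   named cd so that w lies on the c-side of T - cd; then the 2-switch replacing
   the edges wp, cd by wd, cp yields again a tree with the same degrees, and M2
   grows by 4 deg d + deg c - 4 - deg c * deg d, i.e. by 1 or 4.  The number of
   segments is preserved too: a directed segment is determined by its first
   edge (u, v), which may be any edge with deg u <> 2, so a tree has
   sum_(deg u <> 2) deg u directed segments, a number depending only on the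
   degrees. *)

Definition link (T : eqType) (s t : T) : rel T :=
  fun u v => ((u == s) && (v == t)) || ((u == t) && (v == s)).

Definition del_edge (T : eqType) (r : rel T) (s t : T) : rel T :=
  fun u v => r u v && ~~ link s t u v.

Section Degrees.
Variable n : nat.
Implicit Types (r : rel 'I_n) (x y z v : 'I_n).

Lemma deg_sum r x : deg r x = \sum_y r x y.
Proof. by rewrite /deg -sum1_card big_mkcond; apply: eq_bigr => y _; rewrite inE. Qed.

Lemma card_other_nbrs r x y : r x y -> #|[predD1 [pred w | r x w] & y]| = (deg r x).-1.
Proof. by move=> rxy; rewrite /deg [in RHS](cardD1 y) inE /= rxy. Qed.

Lemma deg1_nbr r x y z : deg r x = 1 -> r x y -> r x z -> z = y.
Proof.
move=> dx rxy rxz; have := card_other_nbrs rxy; rewrite dx => /card0_eq/(_ z).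
by rewrite !inE rxz andbT => /negbFE/eqP.
Qed.

Lemma deg2_nbr r x y v w :
  deg r x = 2 -> r x y -> r x v -> r x w -> v != y -> w != y -> v = w.
Proof.
move=> dx rxy rxv rxw vy wy; have := card_other_nbrs rxy; rewrite dx.
move/eqP; rewrite eqn_leq => /andP [/card_le1_eqP le1 _].
by apply: le1; rewrite !inE ?vy ?wy.
Qed.

Lemma deg2_other_nbr r x y : deg r x = 2 -> r x y -> exists2 v, r x v & v != y.
Proof.
move=> dx rxy; have /card_gt0P [v] : 0 < #|[predD1 [pred w | r x w] & y]|.
  by rewrite card_other_nbrs // dx.
by rewrite !inE => /andP [vy rxv]; exists v.
Qed.

End Degrees.

Section Links.
Variable T : eqType.
Implicit Types (s t u v : T).

Lemma link_sym s t u v : link s t u v = link s t v u.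
Proof. by rewrite /link orbC !(andbC (v == _)). Qed.

Lemma linkC s t : link s t =2 link t s.
Proof. by move=> u v; rewrite /link orbC. Qed.

Lemma linkP s t u v : link s t u v -> (u = s /\ v = t) \/ (u = t /\ v = s).
Proof. by case/orP=> /andP [/eqP -> /eqP ->]; [left | right]. Qed.

Lemma link_irr s t u : s != t -> link s t u u = false.
Proof.
by move=> st; apply/negbTE; apply: contra st => /linkP [[<- <-] | [<- <-]].
Qed.

End Links.

Lemma del_edge_sym (T : eqType) (r : rel T) s t :
  symmetric r -> symmetric (del_edge r s t).
Proof. by move=> r_sym u v; rewrite /del_edge r_sym link_sym. Qed.

Lemma sum_link (T : finType) (s t u : T) :
  s != t -> \sum_v link s t u v = (u == s) + (u == t).
Proof.
move=> st; have ts : t != s by rewrite eq_sym.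
rewrite (bigD1 t) // (bigD1 s) //= big1 ?addn0; last first.
  by move=> v /andP [vt vs]; rewrite /link (negbTE vs) (negbTE vt) !andbF.
by rewrite /link !eqxx (negbTE st) (negbTE ts) !andbT !andbF orbF addnC.
Qed.

Lemma sum_pairs_link n (D : 'I_n -> nat) (s t : 'I_n) : s != t ->
  \sum_(u : 'I_n) \sum_(v : 'I_n) ((u < v) && link s t u v) * (D u * D v) = D s * D t.
Proof.
move=> st; have ts : t != s by rewrite eq_sym.
have st_ts : (t, s) != (s, t) by rewrite xpair_eqE (negbTE ts).
rewrite pair_bigA (bigD1 (s, t)) // (bigD1 (t, s)) //= big1 ?addn0; last first.
  move=> [u v] /andP [neq_st neq_ts]; suff /negbTE -> : ~~ link s t u v by rewrite andbF.
  by apply/negP => /linkP [[eu ev] | [eu ev]]; subst u v; rewrite eqxx in neq_st neq_ts.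
rewrite /link !eqxx (negbTE st) (negbTE ts) /= !andbT (mulnC (D t)).
case: ltngtP => [||/val_inj eq_st]; rewrite ?mul1n ?mul0n ?addn0 //.
by rewrite eq_st eqxx in st.
Qed.

Section Connect.
Variable T : finType.
Implicit Types (r : rel T) (x y : T).

Lemma connect_forward r (P : T -> Prop) x y :
  (forall u v, r u v -> P u -> P v) -> connect r x y -> P x -> P y.
Proof.
move=> P_step /connectP [p + ->]; elim: p x => //= z p IH x /andP [rxz pz] Px.
exact: IH pz (P_step _ _ rxz Px).
Qed.

Lemma connect_isolated r x y : (forall u, ~~ r u y) -> connect r x y -> x = y.
Proof.
move=> no_in /connectP [p]; case/lastP: p => [|p z] //=.
rewrite rcons_path last_rcons => /andP [_ r_z] z_y.
by rewrite -z_y (negbTE (no_in _)) in r_z.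
Qed.

Lemma connect_del_edge_ends r x y : symmetric r -> (forall u v, connect r u v) ->
  forall u, connect (del_edge r x y) u x \/ connect (del_edge r x y) u y.
Proof.
move=> r_sym r_conn u; pose f := del_edge r x y.
apply: (connect_forward (P := fun v => connect f v x \/ connect f v y)) (r_conn x u) _;
  last by left.
move=> v w rvw Pv; have [fvw|] := boolP (f v w).
  have fwv : connect f w v by apply: connect1; rewrite /f (del_edge_sym x y r_sym).
  by case: Pv => ?; [left | right]; apply: connect_trans fwv _.
rewrite /f /del_edge rvw negbK => /linkP [[_ ->] | [_ ->]].
- by right.
- by left.
Qed.

Lemma cycle_exit_edge r s p : uniq p -> 2 < size p -> cycle r p -> ~~ cycle s p ->
  exists x y, [/\ r x y, ~~ s x y & connect (del_edge r x y) y x].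
Proof.
move=> Up p3 Cr Cs.
have : ~~ all (fun x => s x (next p x)) p.
  by apply: contra Cs => /allP; apply: cycle_from_next.
case/allPn=> x xp not_s; have r_next := next_cycle Cr xp.
case: (rot_to xp) => i q rot_p.
have next_q : next p x = next (x :: q) x by rewrite -rot_p next_rot.
have Cq : cycle r (x :: q) by rewrite -rot_p rot_cycle.
have Uq : uniq (x :: q) by rewrite -rot_p rot_uniq.
have q3 : 2 < size (x :: q) by rewrite -rot_p size_rot.
clear rot_p; case: q next_q Cq Uq q3 => [|y [|w q]] // next_q Cq Uq _.
have next_y : next p x = y by rewrite next_q /= eqxx.
rewrite next_y in r_next not_s.
exists x, y; split => //; apply/connectP.
exists (w :: rcons q x); last by rewrite /= last_rcons.
move: Cq Uq; rewrite /= => /and3P [_ ryw Pq] /and3P [x_notin y_notin _].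
have xy : x != y by apply: contraNneq x_notin => ->; rewrite inE eqxx.
have wx : w != x by apply: contraNneq x_notin => ->; rewrite !inE eqxx orbT.
rewrite /del_edge ryw /link (negbTE wx) eq_sym (negbTE xy) andbF /=.
apply: (@sub_in_path _ [pred u | u != y] r); last exact: Pq.
- move=> u v; rewrite !inE => uy vy ruv; rewrite ruv /link.
  by rewrite (negbTE vy) (negbTE uy) !andbF.
- rewrite /= all_rcons inE xy /=; apply/andP; split.
    by apply: contraNneq y_notin => ->; rewrite inE eqxx.
  by apply/allP => u uq; rewrite inE; apply: contraNneq y_notin => <-; rewrite inE uq orbT.
Qed.

Lemma connect_del_link r s t x y : symmetric r ->
  link s t x y -> connect (del_edge r x y) y x -> connect (del_edge r s t) s t.
Proof.
move=> r_sym /linkP [[-> ->] | [-> ->]].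
  by rewrite sym_connect_sym //; apply: del_edge_sym.
by rewrite -(eq_connect (e := del_edge r t s)) // => u v; rewrite /del_edge linkC.
Qed.

End Connect.

Lemma acyclic_bridge n (r : rel 'I_n) x y :
  simple_graph r -> acyclic r -> r x y -> ~~ connect (del_edge r x y) x y.
Proof.
move=> [r_sym r_irr] r_acyc rxy; apply/negP => /connectP [p Pp p_y].
case: (shortenP Pp) p_y => q Pq Uq _ q_y.
case: q Pq Uq q_y => [|z [|w q]].
- by move=> _ _ /= x_y; rewrite x_y r_irr in rxy.
- by move=> + _ /= z_y; rewrite z_y /= /del_edge /link !eqxx /= andbF.
move=> Pq Uq q_y; have /negP [] := r_acyc [:: x, z, w & q] isT Uq.
have sub_r : subrel (del_edge r x y) r by move=> u v /andP [].
have /= := sub_path sub_r Pq.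
case/and3P=> -> -> Pwq; rewrite /= rcons_path Pwq /= r_sym.
by rewrite -[last w q]/(last x [:: z, w & q]) -q_y.
Qed.

Section Segments.
Variable n : nat.
Implicit Types (r : rel 'I_n) (x y v : 'I_n) (p z : seq 'I_n).

Definition seg_tail r y z :=
  all (fun v => deg r v == 2) (belast y z) && (deg r (last y z) != 2).

Lemma seg_tail_cons r y v z : seg_tail r y (v :: z) = (deg r y == 2) && seg_tail r v z.
Proof. by rewrite /seg_tail /= andbA. Qed.

Lemma is_dsegment_cons2 r x y z :
  is_dsegment r [:: x, y & z] =
  [&& uniq [:: x, y & z], path r x (y :: z), deg r x != 2 & seg_tail r y z].
Proof. by rewrite /is_dsegment /seg_tail /= [(deg r (last y z) != 2) && _]andbC. Qed.

Lemma is_dsegment_rcons r x p y :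
  is_dsegment r (x :: rcons p y) =
  [&& uniq (x :: rcons p y), path r x (rcons p y), deg r x != 2,
      deg r y != 2 & all (fun v => deg r v == 2) p].
Proof. by rewrite /is_dsegment size_rcons belast_rcons last_rcons. Qed.

Lemma seg_tail_uniq r : symmetric r -> forall z1 z2 x y, r x y ->
  uniq [:: x, y & z1] -> uniq [:: x, y & z2] -> path r y z1 -> path r y z2 ->
  seg_tail r y z1 -> seg_tail r y z2 -> z1 = z2.
Proof.
move=> r_sym; elim=> [|v1 z1 IH] [|v2 z2] x y rxy U1 U2 P1 P2 //; rewrite ?seg_tail_cons.
- by rewrite /seg_tail /= => /negbTE ->.
- by rewrite /seg_tail /= => /andP [->].
case/andP=> [/eqP dy T1] /andP [_ T2].
case/andP: P1 => [ryv1 P1]; case/andP: P2 => [ryv2 P2].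
have v1_x : v1 != x by apply: contraTneq U1 => ->; rewrite /= !inE eqxx !orbT.
have v2_x : v2 != x by apply: contraTneq U2 => ->; rewrite /= !inE eqxx !orbT.
have v12 := deg2_nbr dy (etrans (r_sym _ _) rxy) ryv1 ryv2 v1_x v2_x; subst v2.
by congr (_ :: _); apply: (IH z2 y v1); case/andP: U1; case/andP: U2.
Qed.

Lemma dsegment_uniq r x y z1 z2 : symmetric r ->
  is_dsegment r [:: x, y & z1] -> is_dsegment r [:: x, y & z2] -> z1 = z2.
Proof.
move=> r_sym; rewrite !is_dsegment_cons2.
case/and4P=> [U1 /andP [rxy P1] _ T1] /and4P [U2 /andP [_ P2] _ T2].
exact: (seg_tail_uniq r_sym rxy U1 U2 P1 P2 T1 T2).
Qed.

Lemma acyclic_no_chord r x p y v : acyclic r ->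
  uniq (x :: rcons p y) -> path r x (rcons p y) -> r y v ->
  v \in x :: p -> v != last x p -> False.
Proof.
move=> r_acyc U P ryv vin v_last.
have [p1 [p2 E]] : exists p1 p2, x :: p = p1 ++ v :: p2.
  by move: (x :: p) vin => q /splitPr [p1 p2]; exists p1, p2.
have E' : x :: rcons p y = p1 ++ v :: rcons p2 y by rewrite -rcons_cons E rcons_cat.
case: p2 E E' v_last => [|w p2] E E'.
  by have := congr1 (last x) E; rewrite /= cats1 last_rcons => ->; rewrite eqxx.
move=> _; set c := v :: rcons (w :: p2) y.
have Uc : uniq c by move: U; rewrite E' cat_uniq => /and3P [].
have c3 : 2 < size c by rewrite /= size_rcons.
have /negP [] := r_acyc c c3 Uc.
have := P; rewrite -[path _ _ _]/(sorted r (x :: rcons p y)) E' sorted_cat_cons.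
by case/andP=> _; rewrite /c /= (rcons_path _ _ _ v) last_rcons ryv andbT.
Qed.

Lemma dsegment_exists r x y : simple_graph r -> acyclic r -> r x y -> deg r x != 2 ->
  exists z, is_dsegment r [:: x, y & z].
Proof.
move=> [r_sym r_irr] r_acyc rxy dx.
suff grow : forall N p y, n <= N + size p -> uniq (x :: rcons p y) ->
    path r x (rcons p y) -> all (fun v => deg r v == 2) p ->
    exists z, is_dsegment r (x :: p ++ y :: z).
  apply: (grow n [::] y); rewrite ?addn0 //= ?rxy ?andbT // inE.
  by apply: contraTneq rxy => ->; rewrite r_irr.
elim=> [|N IH] p y' size_p U P D.
  have := max_card (mem (x :: rcons p y')).
  rewrite card_ord (card_uniqP U) /=.
  by rewrite size_rcons; move: size_p; lia.
have [dy'|dy'] := eqVneq (deg r y') 2; last first.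
  by exists [::]; rewrite cats1 is_dsegment_rcons U P dx dy'.
have [Pp r_prev] : path r x p /\ r (last x p) y' by apply/andP; rewrite -rcons_path.
have [v ry'v v_prev] := deg2_other_nbr dy' (etrans (r_sym _ _) r_prev).
have [v_in|v_new] := boolP (v \in x :: rcons p y').
  have v_y' : v != y' by apply: contraTneq ry'v => ->; rewrite r_irr.
  move: v_in; rewrite -rcons_cons mem_rcons inE (negbTE v_y') /= => v_in.
  by case: (acyclic_no_chord r_acyc U P ry'v v_in v_prev).
have [z seg] : exists z, is_dsegment r (x :: rcons p y' ++ v :: z).
  apply: IH; first by rewrite size_rcons addnS.
  - by rewrite -rcons_cons rcons_uniq v_new U.
  - by rewrite rcons_path P last_rcons.
  - by rewrite all_rcons dy'.
by exists (v :: z); rewrite -cat_rcons.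
Qed.

Definition seg_starts r : pred ('I_n * 'I_n) := [pred e | r e.1 e.2 && (deg r e.1 != 2)].

Definition head2 (q : seq 'I_n) : option ('I_n * 'I_n) :=
  if q is x :: y :: _ then Some (x, y) else None.

Lemma dsegment_enum r : simple_graph r -> acyclic r ->
  exists s, [/\ uniq s, forall q, q \in s <-> is_dsegment r q & size s = #|seg_starts r|].
Proof.
move=> r_simple r_acyc.
have [s [head_s segs]] : exists s, map head2 s = map Some (enum (seg_starts r)) /\
    forall q, q \in s -> is_dsegment r q.
  have : all (seg_starts r) (enum (seg_starts r)) by apply/allP => e; rewrite mem_enum.
  elim: (enum _) => [|[x y] L IH] /=; first by exists [::].
  case/andP=> /andP [rxy dx] /IH [s [head_s segs]].
  have [z seg] := dsegment_exists r_simple r_acyc rxy dx.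
  exists ([:: x, y & z] :: s); split; first by rewrite /= head_s.
  by move=> q; rewrite inE => /predU1P [-> | /segs].
exists s; split.
- by apply: (@map_uniq _ _ head2); rewrite head_s (map_inj_uniq (@Some_inj _)) enum_uniq.
- move=> q; split; first exact: segs.
  case: q => [|x [|y z]] // seg.
  have : Some (x, y) \in map head2 s.
    move: seg; rewrite head_s (mem_map (@Some_inj _)) mem_enum is_dsegment_cons2.
    by case/and4P=> _ /andP [rxy _] dx _; rewrite inE /= rxy dx.
  case/mapP=> [[|x' [|y' z']] //= q_s [ex ey]]; subst x' y'.
  by rewrite -(dsegment_uniq (proj1 r_simple) (segs _ q_s) seg).
- by rewrite -(size_map head2) head_s size_map cardE.
Qed.

Lemma num_segmentsE r k : simple_graph r -> acyclic r ->
  num_segments r k <-> #|seg_starts r| = 2 * k.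
Proof.
move=> r_simple r_acyc; have [s0 [uniq_s0 segs0 <-]] := dsegment_enum r_simple r_acyc.
split=> [[s [uniq_s segs <-]] | size_s0]; last by exists s0.
apply/esym/perm_size/uniq_perm => // q.
by apply/idP/idP => [/segs/segs0 | /segs0/segs].
Qed.

Lemma card_seg_starts r : #|seg_starts r| = \sum_x (deg r x != 2) * deg r x.
Proof.
transitivity (\sum_(x | deg r x != 2) \sum_(y | r x y) 1).
  rewrite -sum1_card (pair_big_dep _ _ (fun _ _ => 1)) /=.
  by apply: eq_bigl => e; rewrite inE andbC.
rewrite big_mkcond; apply: eq_bigr => x _.
by case: (deg r x != 2); rewrite ?mul1n // deg_sum big_mkcond.
Qed.

Lemma num_segments_deg r r' k :
  simple_graph r -> acyclic r -> simple_graph r' -> acyclic r' ->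
  deg r =1 deg r' -> num_segments r k -> num_segments r' k.
Proof.
move=> r_simple r_acyc r'_simple r'_acyc deg_r.
rewrite !num_segmentsE // !card_seg_starts.
by under eq_bigr do rewrite deg_r.
Qed.

End Segments.

Definition switch (T : eqType) (r : rel T) (a b c d : T) : rel T :=
  fun u v => del_edge (del_edge r c d) a b u v || link a d u v || link c b u v.

Lemma M2E n (r : rel 'I_n) :
  M2 r = \sum_(u : 'I_n) \sum_(v : 'I_n) ((u < v) && r u v) * (deg r u * deg r v).
Proof.
apply: eq_bigr => u _; rewrite big_mkcond; apply: eq_bigr => v _.
by case: ifP; rewrite ?mul1n.
Qed.

Section Switch.
Variables (n : nat) (e : rel 'I_n) (a b c d : 'I_n).
Hypotheses (e_sym : symmetric e) (e_irr : irreflexive e).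
Hypotheses (eab : e a b) (ecd : e c d) (leaf_b : deg e b = 1) (a_c : a != c).
Hypothesis d_sep_a : ~~ connect (del_edge e c d) d a.

Local Notation f := (del_edge e c d).
Local Notation g := (del_edge (del_edge e c d) a b).
Local Notation e' := (switch e a b c d).

Let leaf_nbr v : e b v -> v = a.
Proof. by apply: deg1_nbr leaf_b _; rewrite e_sym. Qed.

Let a_b : a != b. Proof. by apply: contraTneq eab => ->; rewrite e_irr. Qed.
Let c_d : c != d. Proof. by apply: contraTneq ecd => ->; rewrite e_irr. Qed.
Let a_d : a != d. Proof. by apply: contraNneq d_sep_a => ->; apply: connect0. Qed.

Let not_ead : ~~ e a d.
Proof.
apply: contra d_sep_a => ead; apply: connect1.
by rewrite /del_edge e_sym ead /link (negbTE a_d) (negbTE a_c) !andbF.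
Qed.

Let not_ecb : ~~ e c b.
Proof. by apply: contra a_c => ecb; rewrite -(leaf_nbr (etrans (e_sym _ _) ecb)). Qed.

Let c_b : c != b. Proof. by apply: contraNneq a_d => cb; rewrite (@leaf_nbr d) // -cb. Qed.
Let b_d : b != d. Proof. by apply: contraNneq not_ecb => ->. Qed.

Lemma switch_indicator u v :
  e' u v + link a b u v + link c d u v = e u v + link a d u v + link c b u v.
Proof.
have ab_e : link a b u v ==> e u v.
  by apply/implyP; case/linkP=> [[-> ->] | [-> ->]]; rewrite // e_sym.
have cd_e : link c d u v ==> e u v.
  by apply/implyP; case/linkP=> [[-> ->] | [-> ->]]; rewrite // e_sym.
have ad_e : link a d u v ==> ~~ e u v.
  by apply/implyP; case/linkP=> [[-> ->] | [-> ->]]; rewrite // e_sym.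
have cb_e : link c b u v ==> ~~ e u v.
  by apply/implyP; case/linkP=> [[-> ->] | [-> ->]]; rewrite // e_sym.
have ab_cd : link a b u v ==> ~~ link c d u v.
  apply/implyP; case/linkP=> [[-> ->] | [-> ->]];
  by rewrite /link ?(negbTE a_c) ?(negbTE a_d) /= ?andbF.
have ad_cb : link a d u v ==> ~~ link c b u v.
  apply/implyP; case/linkP=> [[-> ->] | [-> ->]];
  by rewrite /link ?(negbTE a_c) ?(negbTE a_b) /= ?andbF.
apply/eqP; move: ab_e cd_e ad_e cb_e ab_cd ad_cb; rewrite /switch /del_edge.
case: (e u v); case: (link a b u v); case: (link c d u v); case: (link a d u v).
all: case: (link c b u v); by [].
Qed.

Lemma deg_switch : deg e' =1 deg e.
Proof.
move=> u; have : \sum_v (e' u v + link a b u v + link c d u v) =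
                 \sum_v (e u v + link a d u v + link c b u v).
  by apply: eq_bigr => v _; apply: switch_indicator.
rewrite !big_split /= !sum_link ?(eq_sym b c) // -!deg_sum.
by move: (deg e' u) (deg e u) (u == a : nat) (u == b : nat) (u == c : nat) (u == d : nat);
  lia.
Qed.

Lemma switch_simple : simple_graph e'.
Proof.
split=> [u v | u]; first by rewrite /switch /del_edge e_sym !(link_sym _ _ u).
by rewrite /switch /del_edge e_irr !link_irr // eq_sym.
Qed.

Lemma M2_switch :
  M2 e' + deg e a * deg e b + deg e c * deg e d =
  M2 e + deg e a * deg e d + deg e c * deg e b.
Proof.
rewrite !M2E; under eq_bigr do under eq_bigr do rewrite !deg_switch.
rewrite -(sum_pairs_link (deg e) a_b) -(sum_pairs_link (deg e) c_d).
rewrite -(sum_pairs_link (deg e) a_d) -(sum_pairs_link (deg e) c_b) -!big_split.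
apply: eq_bigr => u _; rewrite -!big_split; apply: eq_bigr => v _ /=.
by case: (u < v); rewrite //= -!mulnDl switch_indicator.
Qed.

Let sub_g_e' : subrel g e'. Proof. by move=> u v guv; rewrite /switch guv. Qed.
Let sub_g_f : subrel g f. Proof. by move=> u v /andP []. Qed.

Let not_g_link u v : e u v -> ~~ g u v -> link a b u v || link c d u v.
Proof.
by rewrite /del_edge => -> /=; case: (link c d u v); rewrite ?orbT //= negbK orbF.
Qed.

Let not_g_switch u v : e' u v -> ~~ g u v -> link a d u v || link c b u v.
Proof. by rewrite /switch -orbA => /orP [-> // | ]. Qed.

Lemma core_connect_a_c : (forall u v, connect e u v) -> connect g a c.
Proof.
move=> e_conn; have f_sym : symmetric f by apply: del_edge_sym.
have f_ac : connect f a c.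
  case: (connect_del_edge_ends c d e_sym e_conn a) => // f_ad.
  by move: d_sep_a; rewrite sym_connect_sym // f_ad.
have : c = b \/ connect g a c; last by case=> // cb; move: c_b; rewrite cb eqxx.
apply: (connect_forward (P := fun v => v = b \/ connect g a v)) f_ac _; last by right.
move=> u v fuv [ub | g_au].
  by right; rewrite (@leaf_nbr v) //; rewrite ub in fuv; case/andP: fuv.
have [guv | not_guv] := boolP (g u v).
  by right; apply: connect_trans g_au (connect1 guv).
have /linkP [[_ ->] | [_ ->]] : link a b u v.
  by move: not_guv; rewrite [g u v]/del_edge fuv negbK.
- by left.
- by right.
Qed.

Lemma switch_connected : (forall u v, connect e u v) -> forall u v, connect e' u v.
Proof.
move=> e_conn; have e'_sym := (switch_simple).1.
have e'_ac : connect e' a c.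
  apply: connect_sub (core_connect_a_c e_conn) => u v /sub_g_e'; exact: connect1.
have e'_ca : connect e' c a by rewrite sym_connect_sym.
suff to_a u : connect e' u a.
  by move=> u v; rewrite (connect_trans (to_a u)) // sym_connect_sym.
apply: (connect_forward (P := fun v => connect e' v a)) (e_conn a u) (connect0 _ _).
move=> v w evw e'_va; have [gvw | not_gvw] := boolP (g v w).
  by apply: connect_trans e'_va; rewrite sym_connect_sym //; apply/connect1/sub_g_e'.
case/orP: (not_g_link evw not_gvw) => /linkP [[_ ->] | [_ ->]] //.
- by apply: connect_trans e'_ca; apply: connect1; rewrite /switch /link !eqxx !orbT.
- by apply: connect1; rewrite /switch /link !eqxx !orbT.
Qed.

Lemma switch_bridge_cb : ~~ connect (del_edge e' c b) c b.
Proof.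
apply/negP => /connect_isolated cb; move: c_b; rewrite cb ?eqxx //.
move=> u; apply/negP => /andP [+ /negbTE not_cb]; rewrite /switch not_cb orbF.
have b_a : b != a by rewrite eq_sym.
have -> : link a d u b = false by rewrite /link (negbTE b_d) (negbTE b_a) !andbF.
rewrite orbF => /andP [/andP [eub _]].
by rewrite (leaf_nbr (etrans (e_sym b u) eub)) /link !eqxx.
Qed.

Lemma switch_bridge_ad : acyclic e -> ~~ connect (del_edge e' a d) a d.
Proof.
move=> e_acyc; have f_sym : symmetric f by apply: del_edge_sym.
have c_sep_d : ~~ connect f c d by apply: acyclic_bridge.
have b_sep_d : ~~ connect f b d.
  apply: contra d_sep_a => f_bd; rewrite sym_connect_sym //; apply: connect_trans f_bd.
  by apply: connect1; rewrite /del_edge eab /link (negbTE a_c) (negbTE a_d).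
apply/negP => con; suff : ~~ connect f d d by rewrite connect0.
apply: (connect_forward (P := fun v => ~~ connect f v d)) con _; last first.
  by rewrite sym_connect_sym.
move=> v w /andP [e'vw not_ad] f_sep_v; have [gvw | not_gvw] := boolP (g v w).
  by apply: contra f_sep_v; apply/connect_trans/connect1/sub_g_f.
have : link c b v w by move: (not_g_switch e'vw not_gvw); rewrite (negbTE not_ad).
by case/linkP=> [[_ ->] | [_ ->]].
Qed.

Lemma switch_acyclic : acyclic e -> acyclic e'.
Proof.
move=> e_acyc p p3 Up; apply/negP => C'p.
have [Cg | not_Cg] := boolP (cycle g p).
  have sub_g_e : subrel g e by move=> u v /sub_g_f /andP [].
  by have /negP [] := e_acyc p p3 Up; apply: sub_cycle Cg.
have [x [y [e'xy not_gxy con]]] := cycle_exit_edge Up p3 C'p not_Cg.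
have e'_sym := (switch_simple).1.
case/orP: (not_g_switch e'xy not_gxy) => /(connect_del_link e'_sym) /(_ con).
- by apply/negP; apply: switch_bridge_ad.
- by apply/negP; apply: switch_bridge_cb.
Qed.

Lemma CT_switch k : CT e k -> CT e' k.
Proof.
case=> [[_ [e_conn e_acyc]] e_chem e_segs]; have e'_acyc := switch_acyclic e_acyc.
split; last first.
- apply: num_segments_deg e_segs => //; first exact: switch_simple.
  by move=> v; rewrite deg_switch.
- by move=> v; rewrite deg_switch.
split; first exact: switch_simple.
by split; [exact: switch_connected | exact: e'_acyc].
Qed.

End Switch.

Theorem lemma5 (n k : nat) (e : rel 'I_n) :
  3 <= k <= n - 1 ->
  CT e k ->
  (forall e' : rel 'I_n, CT e' k -> M2 e' <= M2 e) ->
  (exists u v : 'I_n, [/\ e u v, deg e u = 1 & deg e v = 4]) ->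
  ~ (exists u v : 'I_n, [/\ e u v, deg e u = 3 & deg e v = 2]).
Proof.
move=> _ CTe e_max [p [w [epw deg_p deg_w]]] [x [y [exy deg_x deg_y]]].
have [[[e_sym e_irr] [_ e_acyc]] _ _] := CTe.
have ewp : e w p by rewrite e_sym.
have switch_gain c d : e c d -> deg e c = 3 /\ deg e d = 2 \/ deg e c = 2 /\ deg e d = 3 ->
    ~~ connect (del_edge e c d) d w -> False.
  move=> ecd deg_cd sep; have w_c : w != c.
    by apply/eqP => wc; case: deg_cd; rewrite -wc deg_w => -[].
  have := e_max _ (CT_switch e_sym e_irr ewp ecd deg_p w_c sep CTe).
  have := M2_switch e_sym e_irr ewp ecd deg_p w_c sep.
  by rewrite deg_w deg_p; case: deg_cd => [[-> ->] | [-> ->]]; lia.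
have [con | sep] := boolP (connect (del_edge e x y) y w); last first.
  by apply: (switch_gain x y) => //; left.
apply: (switch_gain y x); [by rewrite e_sym | by right | apply/negP => con'].
have del_yx : del_edge e y x =2 del_edge e x y by move=> u v; rewrite /del_edge linkC.
rewrite (eq_connect del_yx) in con'.
have /negP [] := acyclic_bridge (conj e_sym e_irr) e_acyc exy.
by apply: connect_trans con' _; rewrite sym_connect_sym //; apply: del_edge_sym.
Qed.
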